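(* Let $f$ be the two-layer network below with scaling $b>0$ and let $R>0$. Let $x_1,\dots,x_T\in\mathbb{S}_p$ and let $\ell_1,\dots,\ell_T:\mathbb{R}^d\to\mathbb{R}$ be convex, differentiable and $L$-Lipschitz, and write $\ell_t(\theta)=\ell_t(f(\theta;x_t))$. Then Algorithm 1 with step sizes $\eta_t=\frac{2Rb}{CL\sqrt m}\,t^{-1/2}$ satisfies $$\sum_{t=1}^T\ell_t(\theta_t)\le\min_{\theta\in B(R)}\sum_{t=1}^T\ell_t(\theta)+\frac{3CLR\sqrt{mT}}{b}+\frac{2CLR^2}{b}T.$$
   Context: Let $p,d\ge1$, $m$ an even positive integer, $b>0$, $C>0$, and $\mathbb{S}_p=\{x\in\mathbb{R}^p:\|x\|_2=1\}$. Let $\sigma:\mathbb{R}\to\mathbb{R}$ be differentiable with $|\sigma'(z)-\sigma'(z')|\le C|z-z'|$ and $|\sigma'(z)|\le C$ for all $z,z'$. Parameters are $\theta=(\theta[1],\dots,\theta[d])\in\mathbb{R}^{d\times m\times p}$, where $\theta[i]\in\mathbb{R}^{m\times p}$ has rows $\theta[i,1]^\top,\dots,\theta[i,m/2]^\top,\bar\theta[i,1]^\top,\dots,\bar\theta[i,m/2]^\top$. The two-layer network is $f(\theta;x)=(f_1(\theta[1];x),\dots,f_d(\theta[d];x))^\top$ with $f_i(\theta[i];x)=\frac1b\big(\sum_{r=1}^{m/2}a_{i,r}\sigma(\theta[i,r]^\top x)+\sum_{r=1}^{m/2}\bar a_{i,r}\sigma(\bar\theta[i,r]^\top x)\big)$,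 where the $a_{i,r}$ are independent uniform signs in $\{\pm1\}$ and $\bar a_{i,r}=-a_{i,r}$, fixed (not trained). The random initialization $\theta_1$ has $\theta_1[i,r]\sim\mathcal N(0,I_p)$ i.i.d. for $r\le m/2$ and $\bar\theta_1[i,r]=\theta_1[i,r]$. $B(R)=\{\theta:\|\theta-\theta_1\|_F\le R\}$. Algorithm 1 (OGD for neural networks): start at $\theta_1$; at round $t$ play $\theta_t$, receive $x_t$ and $\ell_t$, and update $\theta_{t+1}=\Pi_{B(R)}(\theta_t-\eta_t\nabla_\theta\ell_t(f(\theta_t;x_t)))$, where $\Pi_{B(R)}$ is Frobenius-norm projection onto $B(R)$. *)

From HB Require Import structures.
From mathcomp Require Import all_boot all_order all_algebra.
From mathcomp Require Import all_classical all_reals all_analysis.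
Set Implicit Arguments. Unset Strict Implicit. Unset Printing Implicit Defensive.
Import Order.TTheory GRing.Theory Num.Theory.
Import numFieldNormedType.Exports.
Local Open Scope ring_scope.

(* Parameters theta in R^{d x m x p}: theta i r k = k-th coordinate of the
   r-th row of theta[i].  Rows r < m/2 are theta[i,r], rows m/2 + r are
   bar-theta[i,r]. *)
Definition param (R : realType) (d m p : nat) := 'I_d -> 'I_m -> 'I_p -> R.

Definition eucl (R : realType) (d : nat) (y : 'rV[R]_d) : R :=
  Num.sqrt (\sum_(i < d) (y ord0 i) ^+ 2).

Definition frob (R : realType) (d m p : nat) (th : param R d m p) : R :=
  Num.sqrt (\sum_(i < d) \sum_(r < m) \sum_(k < p) (th i r k) ^+ 2).

Definition psub (R : realType) (d m p : nat) (th th' : param R d m p)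
  : param R d m p := fun i r k => th i r k - th' i r k.

Definition pstep (R : realType) (d m p : nat) (th : param R d m p) (eta : R)
  (g : param R d m p) : param R d m p := fun i r k => th i r k - eta * g i r k.

Definition inBall (R : realType) (d m p : nat) (th1 : param R d m p) (Rad : R)
  (th : param R d m p) : Prop := frob (psub th th1) <= Rad.

Definition is_proj (R : realType) (d m p : nat) (th1 : param R d m p) (Rad : R)
  (y q : param R d m p) : Prop :=
  inBall th1 Rad q /\
  forall z, inBall th1 Rad z -> frob (psub y q) <= frob (psub y z).

(* The two-layer network f(theta; x) in R^d.  The sign a i r for r >= m/2 is
   bar-a = - a (enforced by hypothesis in the theorem). *)
Definition net (R : realType) (d m p : nat) (sigma : R -> R) (b : R)
  (a : 'I_d -> 'I_m -> R) (th : param R d m p) (x : 'I_p -> R) : 'rV[R]_d :=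
  \row_(i < d) (b^-1 * \sum_(r < m) a i r * sigma (\sum_(k < p) th i r k * x k)).

Definition pupd (R : realType) (d m p : nat) (th : param R d m p)
  (i : 'I_d) (r : 'I_m) (k : 'I_p) (s : R) : param R d m p :=
  fun i' r' k' => if (i' == i) && (r' == r) && (k' == k)
                  then th i' r' k' + s else th i' r' k'.

Definition pgrad (R : realType) (d m p : nat) (F : param R d m p -> R)
  (th : param R d m p) : param R d m p :=
  fun i r k => derive1 (fun s => F (pupd th i r k s)) 0.

Definition convex_fun (R : realType) (d : nat) (l : 'rV[R]_d -> R) : Prop :=
  forall (y1 y2 : 'rV[R]_d) (t : R), 0 <= t <= 1 ->
    l (t *: y1 + (1 - t) *: y2) <= t * l y1 + (1 - t) * l y2.

Definition lipschitz_eucl (R : realType) (d : nat) (L : R) (l : 'rV[R]_d -> R)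
  : Prop := forall y1 y2 : 'rV[R]_d, `|l y1 - l y2| <= L * eucl (y1 - y2).

(* Convexity of the loss and a second-order Taylor bound for [sigma] ([sigma'] is
   [C]-Lipschitz) give, for every [th] in the ball,
     l_t(th_t) - l_t(th) <= <grad l_t(th_t), th_t - th> + C L / (2 b) |th_t - th|^2,
   and the quadratic term is at most 2 C L R^2 / b since the ball has diameter 2 R.
   The linear terms are bounded by the projected online-gradient-descent argument:
   the projection is non-expansive, the gradients have Frobenius norm at most
   G = C L sqrt m / b, and the steps K / sqrt t give a linear regret of at most
   2 R^2 sqrt T / K + K G^2 sqrt T = 3 C L R sqrt (m T) / b. *)

From HB Require Import structures.
From mathcomp Require Import all_boot all_order all_algebra.
From mathcomp Require Import all_classical all_reals all_analysis.
From mathcomp Require Import ring lra.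
Import Order.TTheory GRing.Theory Num.Theory.
Import numFieldNormedType.Exports.
Local Open Scope ring_scope.
Set Implicit Arguments. Unset Strict Implicit. Unset Printing Implicit Defensive.

Section ParamSums.
Variables (R : realType) (d m p : nat).
Implicit Types (F G : 'I_d -> 'I_m -> 'I_p -> R) (u v g z : param R d m p).

Definition psum F : R := \sum_(i < d) \sum_(r < m) \sum_(k < p) F i r k.

Definition pdot u v : R := psum (fun i r k => u i r k * v i r k).

Definition pnorm2 u : R := psum (fun i r k => u i r k ^+ 2).

Lemma eq_psum F G : (forall i r k, F i r k = G i r k) -> psum F = psum G.
Proof.
by move=> FG; apply: eq_bigr => i _; apply: eq_bigr => r _; apply: eq_bigr.
Qed.

Lemma ler_psum F G : (forall i r k, F i r k <= G i r k) -> psum F <= psum G.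
Proof.
by move=> FG; apply: ler_sum => i _; apply: ler_sum => r _; apply: ler_sum.
Qed.

Lemma psumD F G : psum (fun i r k => F i r k + G i r k) = psum F + psum G.
Proof.
rewrite /psum -big_split; apply: eq_bigr => i _.
rewrite -big_split; apply: eq_bigr => r _; exact: big_split.
Qed.

Lemma psumZ (c : R) F : psum (fun i r k => c * F i r k) = c * psum F.
Proof.
rewrite /psum mulr_sumr; apply: eq_bigr => i _.
by rewrite mulr_sumr; apply: eq_bigr => r _; rewrite mulr_sumr.
Qed.

Lemma pnorm2_ge0 u : 0 <= pnorm2 u.
Proof.
by apply: sumr_ge0 => i _; apply: sumr_ge0 => r _; apply: sumr_ge0 => k _; exact: sqr_ge0.
Qed.

Lemma frob_le u v : (frob u <= frob v) = (pnorm2 u <= pnorm2 v).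
Proof. by rewrite ler_sqrt // pnorm2_ge0. Qed.

Lemma frob_le_rad u (Rad : R) : 0 <= Rad -> (frob u <= Rad) = (pnorm2 u <= Rad ^+ 2).
Proof. by move=> Rad0; rewrite -[in RHS]ler_sqrt ?sqr_ge0 // sqrtr_sqr ger0_norm. Qed.

Lemma pnorm2_pstep u (e : R) g z :
  pnorm2 (psub (pstep u e g) z) =
  pnorm2 (psub u z) + (- 2 * e) * pdot g (psub u z) + e ^+ 2 * pnorm2 g.
Proof.
by rewrite /pnorm2 /pdot -!psumZ -!psumD; apply: eq_psum => i r k; rewrite /psub /pstep; ring.
Qed.

End ParamSums.

Lemma ler0_of_forall_scaled (R : realType) (A B : R) : 0 <= B ->
  (forall s, 0 < s -> s <= 1 -> 2 * A <= s * B) -> A <= 0.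
Proof.
move=> B0 H; rewrite leNgt; apply/negP => A0.
have AB0 : 0 < A + B by lra.
have s0 : 0 < A / (A + B) by rewrite divr_gt0.
have s1 : A / (A + B) <= 1 by rewrite ler_pdivrMr // mul1r; lra.
have := H _ s0 s1.
have : A / (A + B) * B <= A by rewrite mulrAC ler_pdivrMr //; nra.
lra.
Qed.

Section Ball.
Variables (R : realType) (d m p : nat) (th1 : param R d m p) (Rad : R).
Hypothesis Rad_ge0 : 0 <= Rad.
Implicit Types (u v y q z : param R d m p).

Lemma inBallE u : inBall th1 Rad u = (pnorm2 (psub u th1) <= Rad ^+ 2).
Proof. by rewrite /inBall frob_le_rad. Qed.

Lemma inBall_center : inBall th1 Rad th1.
Proof.
rewrite inBallE /pnorm2 /psum big1 ?sqr_ge0 // => i _; rewrite big1 // => r _.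
by rewrite big1 // => k _; rewrite /psub subrr expr2 mulr0.
Qed.

Lemma inBall_segment u v (s : R) : 0 <= s -> s <= 1 ->
  inBall th1 Rad u -> inBall th1 Rad v ->
  inBall th1 Rad (fun i r k => u i r k + s * (v i r k - u i r k)).
Proof.
move=> s0 s1; rewrite !inBallE => uB vB.
have convex_sq (A B : R) : ((1 - s) * A + s * B) ^+ 2 <= (1 - s) * A ^+ 2 + s * B ^+ 2.
  have : 0 <= s * (1 - s) * (A - B) ^+ 2 by rewrite mulr_ge0 ?sqr_ge0 ?mulr_ge0 ?subr_ge0.
  nra.
apply: le_trans (_ : (1 - s) * pnorm2 (psub u th1) + s * pnorm2 (psub v th1) <= _).
  rewrite /pnorm2 -!psumZ -psumD; apply: ler_psum => i r k; rewrite /psub.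
  by rewrite (_ : _ - _ = (1 - s) * (u i r k - th1 i r k) + s * (v i r k - th1 i r k)) //; ring.
have -> : Rad ^+ 2 = (1 - s) * Rad ^+ 2 + s * Rad ^+ 2 by ring.
by rewrite lerD // ler_wpM2l // subr_ge0.
Qed.

Lemma pnorm2_sub_inBall u v : inBall th1 Rad u -> inBall th1 Rad v ->
  pnorm2 (psub u v) <= 4 * Rad ^+ 2.
Proof.
rewrite !inBallE => uB vB.
apply: le_trans (_ : 2 * pnorm2 (psub u th1) + 2 * pnorm2 (psub v th1) <= _); last lra.
rewrite /pnorm2 -!psumZ -psumD; apply: ler_psum => i r k; rewrite /psub.
have := sqr_ge0 (u i r k + v i r k - 2 * th1 i r k); nra.
Qed.

Lemma is_proj_obtuse y q z : is_proj th1 Rad y q -> inBall th1 Rad z ->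
  pdot (psub y q) (psub z q) <= 0.
Proof.
move=> [qB qmin] zB; apply: (@ler0_of_forall_scaled _ _ (pnorm2 (psub z q))).
  exact: pnorm2_ge0.
move=> s s0 s1; have sB := inBall_segment (ltW s0) s1 qB zB.
have := qmin _ sB; rewrite frob_le.
set w := fun i r k => _.
have -> : pnorm2 (psub y w) =
    pnorm2 (psub y q) + (- 2 * s) * pdot (psub y q) (psub z q) + s ^+ 2 * pnorm2 (psub z q).
  by rewrite /pnorm2 /pdot -!psumZ -!psumD; apply: eq_psum => i r k; rewrite /psub /w; ring.
have := pnorm2_ge0 (psub z q); rewrite expr2; nra.
Qed.

Lemma is_proj_contract y q z : is_proj th1 Rad y q -> inBall th1 Rad z ->
  pnorm2 (psub q z) <= pnorm2 (psub y z).
Proof.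
move=> yq zB; have := is_proj_obtuse yq zB.
have -> : pnorm2 (psub y z) =
    pnorm2 (psub y q) + (- 2) * pdot (psub y q) (psub z q) + pnorm2 (psub q z).
  by rewrite /pnorm2 /pdot -!psumZ -!psumD; apply: eq_psum => i r k; rewrite /psub; ring.
have := pnorm2_ge0 (psub y q); lra.
Qed.
End Ball.

Lemma sum_inv_sqrt_le (R : realType) (T : nat) :
  \sum_(1 <= t < T.+1) (Num.sqrt (t%:R : R))^-1 <= 2 * Num.sqrt (T%:R : R).
Proof.
elim: T => [|T IH]; first by rewrite big_geq // sqrtr0 mulr0.
rewrite big_nat_recr //=.
set a := Num.sqrt (T%:R : R) in IH *; set b := Num.sqrt (T.+1%:R : R).
have a0 : 0 <= a by exact: sqrtr_ge0.
have b0 : 0 < b by rewrite sqrtr_gt0 ltr0n.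
have ab : a <= b by rewrite ler_sqrt // ler_nat.
have bb : b ^+ 2 = a ^+ 2 + 1 by rewrite !sqr_sqrtr ?ler0n // -natr1.
suff : 2 * a + b^-1 <= 2 * b by lra.
rewrite -(ler_pM2r b0) mulrDl mulVf ?gt_eqF //; nra.
Qed.

Lemma telescope_sqrt_le (R : realType) (T : nat) (A : nat -> R) (M : R) :
  (forall t, (1 <= t <= T)%N -> A t <= M) ->
  \sum_(1 <= t < T.+1) (A t - A t.+1) * Num.sqrt (t%:R : R)
    <= (M - A T.+1) * Num.sqrt (T%:R : R).
Proof.
elim: T => [|T IH] AM; first by rewrite big_geq // sqrtr0 mulr0.
rewrite big_nat_recr //=.
have IH' : \sum_(1 <= t < T.+1) (A t - A t.+1) * Num.sqrt (t%:R : R)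
    <= (M - A T.+1) * Num.sqrt (T%:R : R).
  by apply: IH => t /andP[t1 tT]; rewrite AM // t1 ltnW.
have AT : A T.+1 <= M by apply: AM; rewrite leqnn.
have : Num.sqrt (T%:R : R) <= Num.sqrt (T.+1%:R) by rewrite ler_sqrt // ler_nat.
set a := Num.sqrt _ in IH' *; set b := Num.sqrt _; nra.
Qed.

Section OnlineGradientDescent.
Variables (R : realType) (d m p : nat) (th1 : param R d m p) (Rad K : R) (T : nat).
Variables (th g : nat -> param R d m p).
Hypotheses (Rad_gt0 : 0 < Rad) (K_gt0 : 0 < K) (th_1 : th 1%N = th1).
Hypothesis ogd_step : forall t, (1 <= t <= T)%N ->
  is_proj th1 Rad (pstep (th t) (K / Num.sqrt t%:R) (g t)) (th t.+1).

Lemma ogd_inBall t : (1 <= t <= T.+1)%N -> inBall th1 Rad (th t).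
Proof.
case: t => [//|[_|t t_le]]; first by rewrite th_1; apply/inBall_center/ltW.
by case: (@ogd_step t.+1 t_le).
Qed.

Lemma ogd_round z (G : R) t : (1 <= t <= T)%N -> pnorm2 (g t) <= G ^+ 2 ->
  inBall th1 Rad z ->
  pdot (g t) (psub (th t) z) <=
    (pnorm2 (psub (th t) z) - pnorm2 (psub (th t.+1) z)) * Num.sqrt t%:R / (2 * K)
    + K * G ^+ 2 / 2 * (Num.sqrt t%:R)^-1.
Proof.
move=> tT gG zB; have := is_proj_contract (ltW Rad_gt0) (ogd_step tT) zB.
have sq0 : 0 < Num.sqrt (t%:R : R) by rewrite sqrtr_gt0 ltr0n; case/andP: tT.
rewrite pnorm2_pstep; set eta := K / _ => contract.
have eta0 : 0 < eta by rewrite divr_gt0.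
have -> : (pnorm2 (psub (th t) z) - pnorm2 (psub (th t.+1) z)) * Num.sqrt t%:R / (2 * K)
    + K * G ^+ 2 / 2 * (Num.sqrt t%:R)^-1
    = (pnorm2 (psub (th t) z) - pnorm2 (psub (th t.+1) z) + eta ^+ 2 * G ^+ 2) / (2 * eta).
  by rewrite /eta; field; rewrite !gt_eqF.
rewrite ler_pdivlMr; last exact: mulr_gt0.
have : eta ^+ 2 * pnorm2 (g t) <= eta ^+ 2 * G ^+ 2 by rewrite ler_wpM2l ?sqr_ge0.
lra.
Qed.

Lemma ogd_regret z (G : R) : (forall t, (1 <= t <= T)%N -> pnorm2 (g t) <= G ^+ 2) ->
  inBall th1 Rad z ->
  \sum_(1 <= t < T.+1) pdot (g t) (psub (th t) z)
    <= 2 * Rad ^+ 2 * Num.sqrt T%:R / K + K * G ^+ 2 * Num.sqrt T%:R.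
Proof.
move=> gG zB; set A := fun t => pnorm2 (psub (th t) z).
have sT0 : 0 <= Num.sqrt (T%:R : R) := sqrtr_ge0 _.
apply: le_trans (_ : \sum_(1 <= t < T.+1) ((A t - A t.+1) * Num.sqrt t%:R / (2 * K)
    + K * G ^+ 2 / 2 * (Num.sqrt t%:R)^-1) <= _).
  rewrite big_nat_cond [X in _ <= X]big_nat_cond; apply: ler_sum => t /andP[tT _].
  by apply: ogd_round => //; apply: gG.
rewrite big_split /= -mulr_suml -mulr_sumr.
have telescope : \sum_(1 <= t < T.+1) (A t - A t.+1) * Num.sqrt t%:R
    <= 4 * Rad ^+ 2 * Num.sqrt T%:R.
  apply: le_trans (telescope_sqrt_le (M := 4 * Rad ^+ 2) _) _.
    move=> t /andP[t1 tT]; rewrite /A; apply: (pnorm2_sub_inBall (ltW Rad_gt0)) zB.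
    by apply: ogd_inBall; rewrite t1 (leq_trans tT).
  by rewrite ler_wpM2r // gerBl pnorm2_ge0.
have KG0 : 0 <= K * G ^+ 2 / 2.
  by apply: divr_ge0 => //; apply: mulr_ge0; [exact: ltW | exact: sqr_ge0].
have := ler_wpM2l KG0 (sum_inv_sqrt_le R T).
have iK0 : 0 <= (2 * K)^-1 by rewrite invr_ge0 mulr_ge0 // ltW.
have := ler_wpM2r iK0 telescope.
have -> : 4 * Rad ^+ 2 * Num.sqrt T%:R / (2 * K) = 2 * Rad ^+ 2 * Num.sqrt T%:R / K.
  by field; rewrite gt_eqF.
have -> : K * G ^+ 2 / 2 * (2 * Num.sqrt T%:R) = K * G ^+ 2 * Num.sqrt T%:R by field.
lra.
Qed.

End OnlineGradientDescent.

Lemma taylor_sign (R : realType) (f : R -> R) (C e u w : R) :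
  (forall z, derivable f z 1) ->
  (forall z z', `|derive1 f z - derive1 f z'| <= C * `|z - z'|) ->
  `|e| = 1 ->
  e * (f w - f u - derive1 f u * (w - u)) <= C / 2 * (w - u) ^+ 2.
Proof.
move=> df Lf e1; set h := w - u; set A := derive1 f u * h; set K := C / 2 * h ^+ 2.
pose g (s : R) := u + s * h.
pose G : R -> R := e \*: (f \o g - id * cst A) - id ^+ 2 * cst K.
have dG (s : R) : is_derive s 1 G (e * (derive1 f (g s) * h - A) - 2 * s * K).
  have dg : is_derive s 1 g h.
    by apply: is_derive_eq; rewrite add0r mul1r scaler0 add0r [_%:A]mulr1.
  have dfg : is_derive s 1 (f \o g) (derive1 f (g s) * h).
    by apply: is_derive1_comp; apply: DeriveDef; rewrite ?derive1E.
  by apply: is_derive_eq; rewrite !scaler0 !add0r /GRing.scale /=; ring.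
(* [G' <= 0] since [derive1 f] is [C]-Lipschitz; the mean value theorem then gives [G 1 <= G 0]. *)
have cG : {within `[0, 1], continuous G}%classic.
  by apply: derivable_within_continuous => s _; case: (dG s).
have [c /[!in_itv] /= /andP[c0 _]] := MVT ltr01 (fun s _ => dG s) cG.
have -> : G 1 - G 0 = e * (f w - f u - A) - K.
  by rewrite /G !fctE /= /g mul1r mul0r addr0 [u + _]addrC subrK /GRing.scale /=; ring.
have slope : e * (derive1 f (g c) * h - A) <= C * c * h ^+ 2.
  rewrite /A -mulrBl (le_trans (ler_norm _)) // !normrM e1 mul1r.
  have := Lf (g c) u; rewrite /g addrAC subrr add0r normrM (gtr0_norm c0).
  by rewrite mulrA -real_normK ?num_real // expr2 mulrA => /ler_wpM2r ->.
rewrite subr0 mulr1 => mvt.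
have cK : 2 * c * K = C * c * h ^+ 2 by rewrite /K; field.
lra.
Qed.

Lemma taylor_abs (R : realType) (f : R -> R) (C u w : R) :
  (forall z, derivable f z 1) ->
  (forall z z', `|derive1 f z - derive1 f z'| <= C * `|z - z'|) ->
  `|f w - f u - derive1 f u * (w - u)| <= C / 2 * (w - u) ^+ 2.
Proof.
move=> df Lf; have := taylor_sign u w df Lf (normr1 R).
have := taylor_sign u w df Lf (normrN1 R).
rewrite ler_norml; lra.
Qed.

Lemma euclZ (R : realType) (d : nat) (h : R) (v : 'rV[R]_d) :
  0 <= h -> eucl (h *: v) = h * eucl v.
Proof.
move=> h0; rewrite /eucl.
have -> : \sum_(i < d) (h *: v) ord0 i ^+ 2 = h ^+ 2 * \sum_(i < d) v ord0 i ^+ 2.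
  by rewrite mulr_sumr; apply: eq_bigr => i _; rewrite mxE exprMn.
by rewrite sqrtrM ?sqr_ge0 // sqrtr_sqr ger0_norm.
Qed.

Section LossDifferential.
Variables (R : realType) (d : nat) (l : 'rV[R]_d -> R) (y : 'rV[R]_d).
Hypothesis dl : differentiable l y.

Lemma diff_le_of_quotient_le v (M : R) :
  (forall h : R, 0 < h -> h <= 1 -> h^-1 * (l (h *: v + y) - l y) <= M) ->
  'd l y v <= M.
Proof.
move=> H; rewrite -deriveE //.
have : derivable l y v by exact: diff_derivable.
rewrite /derive; set q := fun h : R => _ => /cvg_dnbhs_at_right cvq.
apply: (cvgr_to_le cvq); near=> h; apply: H.
- by near: h; exact: nbhs_right_gt.
- by near: h; exact: nbhs_right_le.
Unshelve. all: by end_near.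
Qed.

Lemma convex_diff_le z : convex_fun l -> 'd l y (z - y) <= l z - l y.
Proof.
move=> cl; apply: diff_le_of_quotient_le => h h0 h1.
have -> : h *: (z - y) + y = h *: z + (1 - h) *: y.
  by apply/rowP => j; rewrite !mxE; ring.
have := cl z y h; rewrite ltW //= h1 => /(_ isT) H.
rewrite ler_pdivrMl //; nra.
Qed.

Lemma lipschitz_diff_le (L : R) v : lipschitz_eucl L l -> 'd l y v <= L * eucl v.
Proof.
move=> ll; apply: diff_le_of_quotient_le => h h0 h1.
have := ll (h *: v + y) y; rewrite addrK (euclZ _ (ltW h0)) => H.
rewrite ler_pdivrMl //; apply: le_trans (ler_norm _) _; lra.
Qed.

Lemma diff_rowE v : 'd l y v = \sum_(i < d) v ord0 i * 'd l y (delta_mx 0 i).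
Proof.
rewrite {1}(row_sum_delta v) linear_sum; apply: eq_bigr => i _; exact: linearZ.
Qed.

Lemma sum_sqr_diff_delta_le (L : R) : lipschitz_eucl L l ->
  \sum_(i < d) 'd l y (delta_mx 0 i) ^+ 2 <= L ^+ 2.
Proof.
move=> ll; set c := fun i => 'd l y (delta_mx 0 i); set S := \sum_(i < d) c i ^+ 2.
have S0 : 0 <= S by apply: sumr_ge0 => i _; exact: sqr_ge0.
have := lipschitz_diff_le (\row_i c i) ll; rewrite diff_rowE /eucl.
under eq_bigr do rewrite mxE -expr2.
under [in X in _ <= _ * Num.sqrt X]eq_bigr do rewrite mxE.
rewrite -/S => SL; have := sqr_sqrtr S0; have := sqrtr_ge0 S; nra.
Qed.

Lemma derive1_along v : derive1 (fun t : R => l (t *: v + y)) 0 = 'd l y v.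
Proof.
rewrite derive1E -deriveE // /derive.
set q := (fun h : R => _ in RHS).
suff -> : (fun h : R => h^-1 *: (((fun t : R => l (t *: v + y)) \o shift 0) h%:A
    - l (0 *: v + y))) = q by [].
by apply/funext => h; rewrite /q /= scale0r add0r addr0 [h%:A]mulr1.
Qed.

Lemma normr_diff_delta_le (L : R) i : 0 <= L -> lipschitz_eucl L l ->
  `|'d l y (delta_mx 0 i)| <= L.
Proof.
move=> L0 /sum_sqr_diff_delta_le; rewrite (bigD1 i) //= => sL.
have : 0 <= \sum_(j < d | j != i) 'd l y (delta_mx 0 j) ^+ 2.
  by apply: sumr_ge0 => j _; exact: sqr_ge0.
rewrite -real_normK ?num_real // in sL; have := normr_ge0 ('d l y (delta_mx 0 i)); nra.
Qed.

End LossDifferential.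

Lemma lipschitz_eucl_ge0 (R : realType) (d : nat) (L : R) (l : 'rV[R]_d -> R) :
  (0 < d)%N -> lipschitz_eucl L l -> 0 <= L.
Proof.
move=> d0 ll; have := ll (const_mx 1) 0; rewrite subr0.
have e0 : 0 < eucl (const_mx 1 : 'rV[R]_d).
  rewrite /eucl sqrtr_gt0 (eq_bigr (fun=> 1)) => [|i _]; last by rewrite mxE expr1n.
  by rewrite sumr_const card_ord ltr0n.
by move/(le_trans (normr_ge0 _)); rewrite pmulr_lge0.
Qed.

Lemma lipschitz_eucl0_const (R : realType) (d : nat) (l : 'rV[R]_d -> R) y z :
  lipschitz_eucl 0 l -> l y = l z.
Proof. by move/(_ y z); rewrite mul0r normr_le0 subr_eq0 => /eqP. Qed.

Lemma sqr_dot_unit_le (R : realType) (p : nat) (v x : 'I_p -> R) :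
  \sum_(k < p) x k ^+ 2 = 1 -> (\sum_(k < p) v k * x k) ^+ 2 <= \sum_(k < p) v k ^+ 2.
Proof.
move=> x1; set c := \sum_(k < p) v k * x k.
have : 0 <= \sum_(k < p) (v k - c * x k) ^+ 2 by apply: sumr_ge0 => k _; exact: sqr_ge0.
rewrite (eq_bigr (fun k => v k ^+ 2 + (- (2 * c)) * (v k * x k) + c ^+ 2 * x k ^+ 2));
  last by move=> k _; ring.
rewrite !big_split /= -!mulr_sumr x1 -/c; lra.
Qed.

Section Network.
Variables (R : realType) (d m p : nat) (sigma : R -> R) (b C : R).
Variable a : 'I_d -> 'I_m -> R.
Hypotheses (b_gt0 : 0 < b) (sigma_derivable : forall z : R, derivable sigma z 1).
Hypothesis sigma'_lipschitz :
  forall z z' : R, `|derive1 sigma z - derive1 sigma z'| <= C * `|z - z'|.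
Hypothesis a_sign : forall i r, a i r = 1 \/ a i r = -1.
Implicit Types (th ths : param R d m p) (x : 'I_p -> R).

Definition preact th x i r : R := \sum_(k < p) th i r k * x k.

(* [c] is the gradient of the loss at the network output; [net_grad c th x] is
   then the chain-rule gradient of [th |-> loss (net th x)]. *)
Definition net_grad (c : 'I_d -> R) th x : param R d m p :=
  fun i r k => c i * (b^-1 * (a i r * (derive1 sigma (preact th x i r) * x k))).

Lemma C_ge0 : 0 <= C.
Proof.
by have := sigma'_lipschitz 1 0; rewrite subr0 normr1 mulr1; apply: le_trans.
Qed.

Lemma normr_a i r : `|a i r| = 1.
Proof. by case: (a_sign i r) => ->; rewrite ?normrN normr1. Qed.

Lemma net_pupd th x i r k s :
  net sigma b a (pupd th i r k s) x =
  (b^-1 * (a i r * (sigma (preact th x i r + s * x k) - sigma (preact th x i r))))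
    *: delta_mx 0 i + net sigma b a th x.
Proof.
apply/rowP => j; rewrite !mxE /pupd.
have [->|ji] := eqVneq j i; last by rewrite /= ?andbF mulr0 add0r.
rewrite eqxx /= mulr1 -mulrDr; congr (_ * _).
rewrite (bigD1 r) //= [in RHS](bigD1 r) //= eqxx /=.
have -> : \sum_(k' < p) (if k' == k then th i r k' + s else th i r k') * x k'
    = preact th x i r + s * x k.
  rewrite /preact (bigD1 k) //= eqxx [in RHS](bigD1 k) //=.
  rewrite (eq_bigr (fun k' => th i r k' * x k')); first by ring.
  by move=> k' /negPf ->.
rewrite (eq_bigr (fun r' => a i r' * sigma (preact th x i r'))); first by ring.
by move=> r' /negPf ->.
Qed.

Lemma pgrad_net (l : 'rV[R]_d -> R) th x : differentiable l (net sigma b a th x) ->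
  pgrad (fun th' => l (net sigma b a th' x)) th =
  net_grad (fun i => 'd l (net sigma b a th x) (delta_mx 0 i)) th x.
Proof.
move=> dl; apply/funext => i; apply/funext => r; apply/funext => k; rewrite /pgrad.
set y := net sigma b a th x; set u := preact th x i r.
pose H : R -> R := (b^-1 * a i r) \*: (sigma \o (fun s => u + s * x k) - cst (sigma u)).
pose phi (t : R) := l (t *: delta_mx 0 i + y).
have -> : (fun s => l (net sigma b a (pupd th i r k s) x)) = phi \o H.
  by apply/funext => s; rewrite /= net_pupd /phi /H !fctE /GRing.scale /= mulrA.
have dH : is_derive (0 : R) 1 H (b^-1 * (a i r * (derive1 sigma u * x k))).
  have dg : is_derive (0 : R) 1 (fun s : R => u + s * x k) (x k).
    by apply: is_derive_eq; rewrite add0r mul1r scaler0 add0r [_%:A]mulr1.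
  have dsg : is_derive (0 : R) 1 (sigma \o (fun s => u + s * x k)) (derive1 sigma u * x k).
    apply: is_derive1_comp; apply: DeriveDef; rewrite ?derive1E mul0r addr0 //.
  by apply: is_derive_eq; rewrite subr0 /GRing.scale /=; ring.
have H0 : H 0 = 0 by rewrite /H !fctE /= mul0r addr0 subrr /GRing.scale /= mulr0.
rewrite derive1_comp; first last.
- by rewrite H0; exact: (derivable1P l y _).1 (@diff_derivable _ _ _ l y _ dl).
- by case: dH.
by rewrite H0 derive1_along // derive1E; case: dH => _ ->.
Qed.

Lemma pnorm2_pgrad_net_le (l : 'rV[R]_d -> R) (L : R) th x :
  (forall z : R, `|derive1 sigma z| <= C) -> \sum_(k < p) x k ^+ 2 = 1 ->
  differentiable l (net sigma b a th x) -> lipschitz_eucl L l ->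
  pnorm2 (pgrad (fun th' => l (net sigma b a th' x)) th)
    <= (C * L * Num.sqrt m%:R / b) ^+ 2.
Proof.
move=> sigma'_le x1 dl ll; have cL := sum_sqr_diff_delta_le dl ll.
rewrite pgrad_net // /pnorm2 /psum /net_grad.
set c := fun i : 'I_d => 'd l (net sigma b a th x) (delta_mx 0 i).
apply: le_trans (_ : \sum_(i < d) \sum_(r < m) c i ^+ 2 * (C / b) ^+ 2 <= _).
  apply: ler_sum => i _; apply: ler_sum => r _.
  set D := derive1 sigma _.
  rewrite (eq_bigr (fun k => (c i * D / b) ^+ 2 * x k ^+ 2)); last first.
    move=> k _; have a2 : a i r ^+ 2 = 1 by case: (a_sign i r) => ->; ring.
    by rewrite -[RHS]mulr1 -a2; ring.
  rewrite -mulr_sumr x1 mulr1 !exprMn -mulrA ler_wpM2l ?sqr_ge0 // ler_wpM2r ?sqr_ge0 //.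
  have := sigma'_le (preact th x i r); rewrite -/D -(real_normK (num_real D)).
  have := normr_ge0 D; nra.
under eq_bigr do rewrite sumr_const card_ord -mulr_natl.
rewrite -mulr_sumr -mulr_suml.
have -> : (C * L * Num.sqrt m%:R / b) ^+ 2 = m%:R * (L ^+ 2 * (C / b) ^+ 2).
  by rewrite !exprMn sqr_sqrtr ?ler0n //; ring.
by rewrite ler_wpM2l ?ler0n // ler_wpM2r ?sqr_ge0.
Qed.

Lemma net_linearization th ths x i : \sum_(k < p) x k ^+ 2 = 1 ->
  `|(net sigma b a ths x - net sigma b a th x) ord0 i
    - b^-1 * \sum_(r < m) a i r * (derive1 sigma (preact th x i r)
                                   * (preact ths x i r - preact th x i r))|
  <= b^-1 * (C / 2 * \sum_(r < m) \sum_(k < p) (th i r k - ths i r k) ^+ 2).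
Proof.
move=> x1; rewrite !mxE -!mulrBr -!sumrB normrM gtr0_norm ?invr_gt0 // ler_pM2l ?invr_gt0 //.
rewrite mulr_sumr; apply: le_trans (ler_norm_sum _ _ _) _; apply: ler_sum => r _.
rewrite -!mulrBr normrM normr_a mul1r.
apply: le_trans (taylor_abs _ _ sigma_derivable sigma'_lipschitz) _.
rewrite ler_wpM2l ?divr_ge0 ?C_ge0 // -sqrrN opprB -sumrB.
rewrite (eq_bigr (fun k => (th i r k - ths i r k) * x k)); first exact: sqr_dot_unit_le.
by move=> k _; rewrite mulrBl.
Qed.

Lemma loss_gap_le (l : 'rV[R]_d -> R) (L : R) th ths x :
  \sum_(k < p) x k ^+ 2 = 1 -> 0 <= L ->
  convex_fun l -> differentiable l (net sigma b a th x) -> lipschitz_eucl L l ->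
  l (net sigma b a th x) - l (net sigma b a ths x) <=
    pdot (pgrad (fun th' => l (net sigma b a th' x)) th) (psub th ths)
    + C * L / (2 * b) * pnorm2 (psub th ths).
Proof.
move=> x1 L0 cl dl ll; rewrite pgrad_net //; set y := net sigma b a th x; set c := fun i => 'd l y _.
pose lin i := b^-1 * \sum_(r < m) a i r * (derive1 sigma (preact th x i r)
                                         * (preact ths x i r - preact th x i r)).
have := convex_diff_le dl (net sigma b a ths x) cl; rewrite diff_rowE -/c.
rewrite (eq_bigr (fun i => c i * lin i + c i * ((net sigma b a ths x - y) ord0 i - lin i)));
  last by move=> i _; ring.
rewrite big_split /=.
have -> : \sum_(i < d) c i * lin i = - pdot (net_grad c th x) (psub th ths).
  rewrite /pdot /psum -sumrN; apply: eq_bigr => i _; rewrite /lin !mulr_sumr -sumrN.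
  apply: eq_bigr => r _; rewrite /preact -sumrB !mulr_sumr -sumrN; apply: eq_bigr => k _.
  by rewrite /net_grad /psub; ring.
suff : - \sum_(i < d) c i * ((net sigma b a ths x - y) ord0 i - lin i)
         <= C * L / (2 * b) * pnorm2 (psub th ths) by lra.
rewrite /pnorm2 /psum mulr_sumr -sumrN; apply: ler_sum => i _.
apply: le_trans (ler_norm _) _; rewrite normrN normrM.
have -> : C * L / (2 * b) = L * b^-1 * (C / 2) by field; rewrite gt_eqF.
rewrite -!mulrA ler_pM ?normr_ge0 ?normr_diff_delta_le //.
by rewrite [C * _]mulrA; exact: net_linearization.
Qed.
End Network.

Lemma sum_regret_le (R : realType) (T : nat) (F F' ip : nat -> R) (B E : R) :
  (forall t, (1 <= t <= T)%N -> F t - F' t <= ip t + E) ->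
  \sum_(1 <= t < T.+1) ip t <= B ->
  \sum_(1 <= t < T.+1) F t <= \sum_(1 <= t < T.+1) F' t + B + E * T%:R.
Proof.
move=> round ipB.
have -> : E * T%:R = \sum_(1 <= t < T.+1) E by rewrite sumr_const_nat subn1 mulr_natr.
suff : \sum_(1 <= t < T.+1) F t <= \sum_(1 <= t < T.+1) (F' t + ip t + E).
  by rewrite !big_split /=; lra.
rewrite big_nat_cond [X in _ <= X]big_nat_cond; apply: ler_sum => t /andP[tT _].
by have := round t tT; lra.
Qed.


Lemma sum_losses_lipschitz0 (R : realType) (d T : nat) (l : nat -> 'rV[R]_d -> R)
    (y z : nat -> 'rV[R]_d) :
  (forall t, (1 <= t <= T)%N -> lipschitz_eucl 0 (l t)) ->
  \sum_(1 <= t < T.+1) l t (y t) = \sum_(1 <= t < T.+1) l t (z t).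
Proof. by move=> l0; apply: eq_big_nat => t tT; exact: lipschitz_eucl0_const (l0 t tT). Qed.

Unset Implicit Arguments.

Theorem mainTheorem4 (R : realType) (p d m : nat) (b C L Rad : R)
  (sigma : R -> R) (a : 'I_d -> 'I_m -> R) (th1 : param R d m p)
  (T : nat) (x : nat -> 'I_p -> R) (l : nat -> 'rV[R]_d -> R)
  (th : nat -> param R d m p) :
  (0 < p)%N -> (0 < d)%N -> (0 < m)%N -> ~~ odd m ->
  0 < b -> 0 < C -> 0 < Rad ->
  (forall z : R, derivable sigma z 1) ->
  (forall z z' : R, `|derive1 sigma z - derive1 sigma z'| <= C * `|z - z'|) ->
  (forall z : R, `|derive1 sigma z| <= C) ->
  (forall i r, a i r = 1 \/ a i r = -1) ->
  (forall i (r r' : 'I_m), val r = (val r' + m./2)%N -> a i r = - a i r') ->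
  (forall i (r r' : 'I_m), val r = (val r' + m./2)%N -> th1 i r = th1 i r') ->
  (forall t, (1 <= t <= T)%N -> \sum_(k < p) (x t k) ^+ 2 = 1) ->
  (forall t, (1 <= t <= T)%N ->
     [/\ convex_fun (l t), (forall y, differentiable (l t) y)
       & lipschitz_eucl L (l t)]) ->
  th 1%N = th1 ->
  (forall t, (1 <= t <= T)%N ->
     is_proj th1 Rad
       (pstep (th t)
          (2 * Rad * b / (C * L * Num.sqrt (m%:R)) / Num.sqrt (t%:R))
          (pgrad (fun th' => l t (net sigma b a th' (x t))) (th t)))
       (th t.+1)) ->
  forall thc : param R d m p, inBall th1 Rad thc ->
  \sum_(1 <= t < T.+1) l t (net sigma b a (th t) (x t))
  <= \sum_(1 <= t < T.+1) l t (net sigma b a thc (x t))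
     + 3 * C * L * Rad * Num.sqrt (m%:R * T%:R) / b
     + 2 * C * L * Rad ^+ 2 / b * T%:R.
Proof.
move=> _ d_gt0 m_gt0 _ b_gt0 C_gt0 Rad_gt0 dsigma Lsigma' Bsigma' a_sign _ _ x_unit l_ok
  th_1 step thc thc_in.
have [->|T_gt0] := eqVneq T 0%N; first by rewrite !big_geq // mulr0 sqrtr0 !(mulr0, mul0r, addr0).
have [_ _ lip1] := l_ok 1%N (ltac:(by rewrite leqnn lt0n)).
have := lipschitz_eucl_ge0 d_gt0 lip1; rewrite le_eqVlt => /predU1P[L0|L_gt0].
  rewrite -L0 !(mulr0, mul0r) !addr0 (sum_losses_lipschitz0 _ (fun t => net sigma b a thc (x t))) //.
  by move=> t tT; have [_ _] := l_ok t tT; rewrite -L0.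
have K_gt0 : 0 < 2 * Rad * b / (C * L * Num.sqrt m%:R).
  by rewrite !(mulr_gt0, invr_gt0) ?sqrtr_gt0 ?ltr0n.
pose ip t := pdot (pgrad (fun th' => l t (net sigma b a th' (x t))) (th t)) (psub (th t) thc).
apply: (sum_regret_le (ip := ip)) => [t tT|].
- have [cl dl ll] := l_ok t tT.
  apply: le_trans (loss_gap_le (th := th t) b_gt0 dsigma Lsigma' a_sign thc (x_unit t tT)
    (ltW L_gt0) cl (dl _) ll) _.
  have tT1 : (1 <= t <= T.+1)%N by case/andP: tT => -> /leqW.
  have := pnorm2_sub_inBall (ltW Rad_gt0) (ogd_inBall Rad_gt0 th_1 step tT1) thc_in.
  have -> : 2 * C * L * Rad ^+ 2 / b = C * L / (2 * b) * (4 * Rad ^+ 2) by field; rewrite gt_eqF.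
  by rewrite lerD2l; apply: ler_wpM2l; rewrite ?divr_ge0 ?mulr_ge0 ?ltW.
- apply: le_trans (ogd_regret Rad_gt0 K_gt0 th_1 step (G := C * L * Num.sqrt m%:R / b) _ thc_in) _.
    move=> t tT; have [_ dl ll] := l_ok t tT.
    by apply: pnorm2_pgrad_net_le => //; apply: x_unit.
  have sqrt_m_gt0 : 0 < Num.sqrt (m%:R : R) by rewrite sqrtr_gt0 ltr0n.
  rewrite sqrtrM ?ler0n // le_eqVlt; apply/orP; left; apply/eqP.
  by field; rewrite !gt_eqF.
Qed.
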